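(* Let $N$ be a tree rooted at $g$ with positive edge capacities $c_e$, and let $T$ be the tree obtained from $N$ by the procedure Create-Binary-Tree described in the context. Let $G_R$ be any request graph on $V\cup\{g\}$ with bandwidths $f_e$. Then $N$ and $T$ have the same set of leaves $L$, and for every embedding $\pi:V\to L$ (with $\pi(g)=g$), the congestion of $\pi$ as an embedding into $N$ equals the congestion of $\pi$ as an embedding into $T$. In particular, the minimum congestion of embedding $G_R$ into $N$ equals the minimum congestion of embedding $G_R$ into $T$.
   Context: Create-Binary-Tree$(N,g)$: for every node $v$ of $N$ with degree greater than $3$, let $u_1,\dots,u_d$ be the children of $v$ and $e_1,\dots,e_d$ the edges joining $v$ to $u_1,\dots,u_d$; replace $e_1,\dots,e_d$ by a (complete) binary tree rooted at $v$ whose leaves are $u_1,\dots,u_d$, where the new intermediate nodes are auxiliary (non-leaf) nodes; set the capacity of the edge from $u_i$ to its new parent equal to $c_{e_i}$, and the capacity of every other new edge equal to $\infty$. The request graph $G_R$ has vertex set $V\cup\{g\}$, $V=\{v_1,\dots,v_k\}$ virtual machines, edges $(v_i,g)$ or $(v_i,v_j)$ with bandwidths $f_e\ge0$. An embedding is an injective map $\pi:V\to L$ into the leaves, with $\pi(g)=g$. For a host tree $H$ and edge $e$ of $H$, $\mathrm{cong}(\pi,e)=\frac1{c_e}\sum f_{(u,v)}$ over request edges $(u,v)$ whose path in $H$ between $\pi(u)$ and $\pi(v)$ contains $e$ (an edge of capacity $\infty$ has congestion $0$); the congestion of $\pi$ is the maximum over edges of $H$. *)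

From mathcomp Require Import all_boot all_order all_algebra.
Set Implicit Arguments. Unset Strict Implicit. Unset Printing Implicit Defensive.
Import Order.TTheory GRing.Theory Num.Theory.
Local Open Scope ring_scope.

(* Host trees.  A host tree rooted at the gateway g is represented by the     *)
(* list of edges leaving the root g ("forest" below g).  Every edge is        *)
(* stored together with the subtree hanging below it, as a pair              *)
(*   (capacity, subtree),  capacity : option R,  None = infinite capacity.   *)
(* Non-root nodes are either labelled leaves [Leaf x] (servers, x : nat) or  *)
(* internal nodes [Node ch] with their list of child edges.                  *)
Inductive tree (R : Type) : Type :=
| Leaf of nat
| Node of seq (option R * tree R).
Arguments Leaf {R} _.
Arguments Node {R} _.

Definition forest (R : Type) := seq (option R * tree R).

Section Trees.
Variable R : realFieldType.

Fixpoint leaves (t : tree R) : seq nat :=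
  match t with
  | Leaf x => [:: x]
  | Node ch =>
      (fix lf (l : seq (option R * tree R)) : seq nat :=
         match l with [::] => [::] | (_, s) :: l' => leaves s ++ lf l' end) ch
  end.

Definition leavesF (H : forest R) : seq nat := flatten (map (fun e => leaves e.2) H).

Fixpoint edges (t : tree R) : seq (option R * tree R) :=
  match t with
  | Leaf _ => [::]
  | Node ch =>
      (fix ef (l : seq (option R * tree R)) : seq (option R * tree R) :=
         match l with [::] => [::] | e :: l' => e :: edges e.2 ++ ef l' end) ch
  end.

Definition edgesF (H : forest R) : seq (option R * tree R) :=
  flatten (map (fun e => e :: edges e.2) H).

Definition cap_pos (c : option R) : bool := if c is Some x then 0 < x else false.
Definition node_nonempty (t : tree R) : bool :=
  if t is Node [::] then false else true.

(* N is a tree rooted at g with positive (finite) edge capacities, whose      *)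
(* leaves (nodes of degree 1 other than g) are exactly the labelled [Leaf]s,  *)
(* labelled injectively.                                                      *)
Definition host_ok (N : forest R) : bool :=
  all (fun e => cap_pos e.1 && node_nonempty e.2) (edgesF N) && uniq (leavesF N).

(* [binitem xs y]: y = (capacity, subtree) is an edge whose lower part is a   *)
(* full binary tree of new auxiliary nodes whose leaves are the edges xs      *)
(* (in order); a single edge is kept with its own capacity c_{e_i}, every     *)
(* new edge between auxiliary nodes has capacity infinity (None).             *)
Inductive binitem : seq (option R * tree R) -> option R * tree R -> Prop :=
| bi_one x : binitem [:: x] x
| bi_split a b ia ib :
    binitem a ia -> binitem b ib -> binitem (a ++ b) (None, Node [:: ia; ib]).

(* the edges xs from v to its children are replaced by a binary tree rooted   *)
(* at v: v gets exactly two child edges ys *)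
Definition binchildren (xs ys : seq (option R * tree R)) : Prop :=
  exists a b ia ib, [/\ xs = a ++ b, binitem a ia, binitem b ib & ys = [:: ia; ib]].

(* degree of a node with child list ch: number of children, plus one for the  *)
(* parent edge unless the node is the root g *)
Definition node_degree (isroot : bool) (ch : seq (option R * tree R)) : nat :=
  (size ch + (~~ isroot))%N.

Definition cbt_kids (isroot : bool) (ch ch' : seq (option R * tree R)) : Prop :=
  if (3 < node_degree isroot ch)%N then binchildren ch ch' else ch' = ch.

Inductive cbt_tree : tree R -> tree R -> Prop :=
| cbt_leaf x : cbt_tree (Leaf x) (Leaf x)
| cbt_node ch ch' ch'' :
    cbt_list ch ch' -> cbt_kids false ch' ch'' -> cbt_tree (Node ch) (Node ch'')
with cbt_list : seq (option R * tree R) -> seq (option R * tree R) -> Prop :=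
| cbt_nil : cbt_list [::] [::]
| cbt_cons c t t' l l' :
    cbt_tree t t' -> cbt_list l l' -> cbt_list ((c, t) :: l) ((c, t') :: l').

Definition create_binary_tree (N T : forest R) : Prop :=
  exists N', cbt_list N N' /\ cbt_kids true N' T.

(* Request graph on V ∪ {g}, V = 'I_k (VM v_i = i), g = None.  Request edges *)
(* are pairs (v_i, w) with w = None (the edge (v_i,g)) or w = Some j (the     *)
(* edge (v_i,v_j)); f gives the bandwidths. *)
Definition request_ok k (E : seq ('I_k * option 'I_k)) (f : 'I_k * option 'I_k -> R)
  : Prop :=
  uniq E /\ (forall e, e \in E -> e.2 != Some e.1 /\ 0 <= f e).

Definition embedding (H : forest R) k (pi : 'I_k -> nat) : Prop :=
  injective pi /\ (forall i, pi i \in leavesF H).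

(* position of an endpoint in the host: pi(v_i) for v_i, g for g *)
Definition below k (pi : 'I_k -> nat) (S : tree R) (w : option 'I_k) : bool :=
  if w is Some i then pi i \in leaves S else false.

(* the edge e = (c, S) lies on the (unique) path between pi(u) and pi(w) iff *)
(* e is on exactly one of the two root paths, i.e. iff exactly one of the     *)
(* two endpoints lies below e *)
Definition on_path k (pi : 'I_k -> nat) (S : tree R) (u w : option 'I_k) : bool :=
  below pi S u != below pi S w.

Definition edge_cong k (E : seq ('I_k * option 'I_k)) (f : 'I_k * option 'I_k -> R)
  (pi : 'I_k -> nat) (e : option R * tree R) : R :=
  if e.1 is Some c then
    c^-1 * \sum_(r <- E | on_path pi e.2 (Some r.1) r.2) f r
  else 0.

Definition congestion (H : forest R) k (E : seq ('I_k * option 'I_k))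
  (f : 'I_k * option 'I_k -> R) (pi : 'I_k -> nat) : R :=
  \big[Num.max/0]_(e <- edgesF H) edge_cong E f pi e.

Definition min_congestion (H : forest R) k (E : seq ('I_k * option 'I_k))
  (f : 'I_k * option 'I_k -> R) (m : R) : Prop :=
  (exists pi, embedding H pi /\ congestion H E f pi = m) /\
  (forall pi, embedding H pi -> m <= congestion H E f pi).

End Trees.

From mathcomp Require Import all_boot all_order all_algebra.
Set Implicit Arguments. Unset Strict Implicit. Unset Printing Implicit Defensive.
Import Order.TTheory GRing.Theory Num.Theory.
Local Open Scope ring_scope.

(* Create-Binary-Tree keeps every original edge together with its capacity
   and the (ordered) list of leaves below it, and adds only edges of
   infinite capacity, whose congestion is 0.  The congestion of an edge only
   depends on its capacity and the leaves below it, so the maximum over the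
   edges, taken together with 0, is the same in N and in T; and since the
   leaves are unchanged, so are the embeddings. *)

Scheme cbt_tree_mutind := Induction for cbt_tree Sort Prop
with cbt_list_mutind := Induction for cbt_list Sort Prop.
Combined Scheme cbt_mutind from cbt_tree_mutind, cbt_list_mutind.

Lemma eq_big_factor (A I J : Type) (op : A -> A -> A) (idx : A) (g : I -> J)
    (F : I -> A) (s s' : seq I) :
  map g s = map g s' -> (forall i i', g i = g i' -> F i = F i') ->
  \big[op/idx]_(i <- s) F i = \big[op/idx]_(i <- s') F i.
Proof.
move=> + Fg; elim: s s' => [|i s IH] [|i' s'] //= [/Fg Fi /IH Fs].
by rewrite !big_cons Fi Fs.
Qed.

Section CreateBinaryTree.
Variable R : realFieldType.
Local Notation edge := (option R * tree R)%type.

Lemma leaves_Node (ch : seq edge) : leaves (Node ch) = leavesF ch.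
Proof. by elim: ch => [|[c s] l IH] //=; congr (_ ++ _); exact: IH. Qed.

Lemma edges_Node (ch : seq edge) : edges (Node ch) = edgesF ch.
Proof. by elim: ch => [|[c s] l IH] //=; congr (_ :: (_ ++ _)); exact: IH. Qed.

Lemma leavesF1 (e : edge) : leavesF [:: e] = leaves e.2.
Proof. exact: cats0. Qed.

Lemma edgesF1 (e : edge) : edgesF [:: e] = e :: edges e.2.
Proof. exact: cats0. Qed.

Lemma leavesF_cat (a b : forest R) : leavesF (a ++ b) = leavesF a ++ leavesF b.
Proof. by rewrite /leavesF map_cat flatten_cat. Qed.

Lemma edgesF_cat (a b : forest R) : edgesF (a ++ b) = edgesF a ++ edgesF b.
Proof. by rewrite /edgesF map_cat flatten_cat. Qed.

Definition edge_cut (e : edge) : option R * seq nat := (e.1, leaves e.2).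

Definition finite_cuts (s : seq edge) := [seq edge_cut e | e <- s & e.1 != None].

Lemma finite_cuts_cat (s s' : seq edge) :
  finite_cuts (s ++ s') = finite_cuts s ++ finite_cuts s'.
Proof. by rewrite /finite_cuts filter_cat map_cat. Qed.

Definition cut_equiv (H H' : forest R) :=
  leavesF H = leavesF H' /\ finite_cuts (edgesF H) = finite_cuts (edgesF H').

Lemma cut_equiv_refl H : cut_equiv H H.
Proof. by []. Qed.

Lemma cut_equiv_sym H H' : cut_equiv H H' -> cut_equiv H' H.
Proof. by move=> [L C]; split; [rewrite L | rewrite C]. Qed.

Lemma cut_equiv_trans H1 H2 H3 :
  cut_equiv H1 H2 -> cut_equiv H2 H3 -> cut_equiv H1 H3.
Proof. by move=> [L12 C12] [L23 C23]; split; [rewrite L12 | rewrite C12]. Qed.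

Lemma cut_equiv_cat a a' b b' :
  cut_equiv a a' -> cut_equiv b b' -> cut_equiv (a ++ b) (a' ++ b').
Proof.
move=> [La Ca] [Lb Cb]; split; first by rewrite !leavesF_cat La Lb.
by rewrite !edgesF_cat !finite_cuts_cat Ca Cb.
Qed.

Lemma cut_equiv_edge c t t' :
  leaves t = leaves t' -> finite_cuts (edges t) = finite_cuts (edges t') ->
  cut_equiv [:: (c, t)] [:: (c, t')].
Proof.
move=> Lt Ct; rewrite /cut_equiv !leavesF1 !edgesF1; split=> //.
rewrite -cat1s -[(c, t') :: _]cat1s !finite_cuts_cat Ct.
by case: c => [c|] //=; rewrite /edge_cut /= Lt.
Qed.

Lemma cut_equiv_infinite_edge (ch : seq edge) : cut_equiv [:: (None, Node ch)] ch.
Proof.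
by rewrite /cut_equiv leavesF1 edgesF1 leaves_Node edges_Node.
Qed.

Lemma binitem_cut_equiv xs y : binitem xs y -> cut_equiv [:: y] xs.
Proof.
elim=> [x | a b ia ib _ Ea _ Eb]; first exact: cut_equiv_refl.
exact: cut_equiv_trans (cut_equiv_infinite_edge _) (cut_equiv_cat Ea Eb).
Qed.

Lemma cbt_kids_cut_equiv isroot ch ch' : cbt_kids isroot ch ch' -> cut_equiv ch' ch.
Proof.
rewrite /cbt_kids; case: ifP => _; last by move->.
move=> [a [b [ia [ib [-> Ha Hb ->]]]]].
exact: (cut_equiv_cat (binitem_cut_equiv Ha) (binitem_cut_equiv Hb)).
Qed.

Lemma cbt_cut_equiv :
  (forall t t', cbt_tree t t' ->
     leaves t' = leaves t /\ finite_cuts (edges t') = finite_cuts (edges t)) /\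
  (forall l l', cbt_list l l' -> cut_equiv l' l).
Proof.
apply: cbt_mutind => //.
- move=> ch ch' ch'' _ E' /cbt_kids_cut_equiv E''.
  by rewrite !leaves_Node !edges_Node; exact: cut_equiv_trans E'' E'.
- move=> c t t' l l' _ [Lt Ct] _ El.
  exact: (cut_equiv_cat (cut_equiv_edge c Lt Ct) El).
Qed.

Lemma create_binary_tree_cut_equiv N T : create_binary_tree N T -> cut_equiv T N.
Proof.
move=> [N' [/(cbt_cut_equiv.2) EN' /cbt_kids_cut_equiv ET]].
exact: cut_equiv_trans ET EN'.
Qed.

Lemma bigmax_finite_cuts (F : edge -> R) (s s' : seq edge) :
  (forall t, F (None, t) = 0) ->
  (forall e e', edge_cut e = edge_cut e' -> F e = F e') ->
  finite_cuts s = finite_cuts s' ->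
  \big[Num.max/0]_(e <- s) F e = \big[Num.max/0]_(e <- s') F e.
Proof.
move=> F0 Fcut cuts.
have drop_infinite s0 : \big[Num.max/0]_(e <- s0) F e =
    \big[Num.max/0]_(e <- [seq e <- s0 | e.1 != None]) F e.
  rewrite big_filter [RHS]big_rmcond_idem //; first exact: maxxx.
  by case=> -[c|] t //= _; rewrite F0.
rewrite (drop_infinite s) (drop_infinite s'); exact: eq_big_factor cuts Fcut.
Qed.

Lemma edge_cong_cut k (E : seq ('I_k * option 'I_k)) f pi (e e' : edge) :
  edge_cut e = edge_cut e' -> edge_cong E f pi e = edge_cong E f pi e'.
Proof.
by case: e e' => c t [c' t'] [<- Lt]; rewrite /edge_cong /on_path /below /= Lt.
Qed.

Lemma congestion_cut_equiv (H H' : forest R) k (E : seq ('I_k * option 'I_k)) f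
    (pi : 'I_k -> nat) :
  cut_equiv H H' -> congestion H E f pi = congestion H' E f pi.
Proof.
move=> [_ cuts]; apply: bigmax_finite_cuts cuts => // e e'.
exact: edge_cong_cut.
Qed.

Lemma embedding_cut_equiv (H H' : forest R) k (pi : 'I_k -> nat) :
  cut_equiv H H' -> embedding H pi <-> embedding H' pi.
Proof. by move=> [L _]; rewrite /embedding L. Qed.

Lemma min_congestion_cut_equiv (H H' : forest R) k (E : seq ('I_k * option 'I_k))
    f (m : R) :
  cut_equiv H H' -> min_congestion H E f m -> min_congestion H' E f m.
Proof.
move=> EH [[pi [Hpi <-]] Hmin]; split.
  exists pi; split; first exact/(embedding_cut_equiv _ EH).
  by rewrite (congestion_cut_equiv _ _ _ EH).
by move=> p /(embedding_cut_equiv _ EH)/Hmin; rewrite !(congestion_cut_equiv _ _ _ EH).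
Qed.

End CreateBinaryTree.

Theorem lemma1 (R : realFieldType) (N T : forest R) :
  host_ok N -> create_binary_tree N T ->
  leavesF T =i leavesF N /\
  (forall (k : nat) (E : seq ('I_k * option 'I_k)) (f : 'I_k * option 'I_k -> R),
     request_ok E f ->
     (forall pi : 'I_k -> nat, embedding N pi ->
        congestion N E f pi = congestion T E f pi) /\
     (forall m : R, min_congestion N E f m <-> min_congestion T E f m)).
Proof.
move=> _ /create_binary_tree_cut_equiv ET.
split=> [x | k E f _]; first by case: ET => ->.
split=> [pi _ | m]; first exact/esym/congestion_cut_equiv.
by split; apply: min_congestion_cut_equiv => //; exact: cut_equiv_sym.
Qed.
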